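(* Let $S$ be a $\Gamma$-AG$^{**}$-groupoid. Then $S$ is intra-regular if and only if $A=(S\Gamma A)\Gamma(S\Gamma A)$ for every left $\Gamma$-ideal $A$ of $S$.
   Context: Let $S$ and $\Gamma$ be nonempty sets with a map $S\times\Gamma\times S\to S$, $(x,\gamma,y)\mapsto x\gamma y$. $S$ is a $\Gamma$-AG-groupoid if $(x\gamma y)\delta z=(z\gamma y)\delta x$ for all $x,y,z\in S$, $\gamma,\delta\in\Gamma$; it is a $\Gamma$-AG$^{**}$-groupoid if moreover $a\alpha(b\beta c)=b\alpha(a\beta c)$ for all $a,b,c\in S$, $\alpha,\beta\in\Gamma$. For subsets $A,B\subseteq S$, $A\Gamma B=\{a\gamma b: a\in A,\gamma\in\Gamma,b\in B\}$. $S$ is intra-regular if for every $a\in S$ there exist $x,y\in S$ and $\beta,\gamma,\delta\in\Gamma$ with $a=(x\beta(a\delta a))\gamma y$. A nonempty subset $A$ is a left $\Gamma$-ideal if $S\Gamma A\subseteq A$. *)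

Definition gamma_AG {S G : Type} (op : S -> G -> S -> S) : Prop :=
  forall (x y z : S) (g d : G), op (op x g y) d z = op (op z g y) d x.

Definition gamma_AGss {S G : Type} (op : S -> G -> S -> S) : Prop :=
  gamma_AG op /\
  forall (a b c : S) (al be : G), op a al (op b be c) = op b al (op a be c).

Definition gprod {S G : Type} (op : S -> G -> S -> S) (A B : S -> Prop) : S -> Prop :=
  fun s => exists a g b, A a /\ B b /\ s = op a g b.

Definition fullset {S : Type} : S -> Prop := fun _ => True.

Definition subset {S : Type} (A B : S -> Prop) : Prop := forall s, A s -> B s.

Definition set_eq {S : Type} (A B : S -> Prop) : Prop := forall s, A s <-> B s.

Definition left_gamma_ideal {S G : Type} (op : S -> G -> S -> S) (A : S -> Prop) : Prop :=
  (exists a, A a) /\ subset (gprod op fullset A) A.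

Definition intra_regular {S G : Type} (op : S -> G -> S -> S) : Prop :=
  forall a : S, exists (x y : S) (be ga de : G), a = op (op x be (op a de a)) ga y.


(* If a = (x b (a d a)) g y, the AG-laws rewrite this as a = (y b (x d a)) g a; for a in a
   left ideal A both factors lie in S Γ A, which gives A ⊆ (SΓA)Γ(SΓA), and the reverse
   inclusion holds for any left ideal.  Conversely, the hypothesis applied to A = S shows
   that every element is a product, which makes A = {a} ∪ SΓa a left ideal; writing
   a ∈ (SΓA)Γ(SΓA) and using the medial law gives a = p d (a e a), from which
   intra-regularity follows by one more use of the AG-laws. *)

Section GammaAG.

Variables (S G : Type) (op : S -> G -> S -> S).

Hypothesis invertive : gamma_AG op.

Lemma gamma_AG_medial (a b c f : S) (g d e : G) :
  op (op a g b) d (op c e f) = op (op a g c) d (op b e f).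
Proof.
  rewrite invertive, (invertive c f b e g), invertive. reflexivity.
Qed.

Lemma left_ideal_gprod_sub (B A : S -> Prop) :
  left_gamma_ideal op A -> subset (gprod op B A) A.
Proof.
  intros [_ Hsub] s [x [g [b [_ [Hb ->]]]]].
  apply Hsub. exists x, g, b. repeat split; assumption.
Qed.

Lemma left_ideal_gprod_square_sub (A : S -> Prop) :
  left_gamma_ideal op A ->
  subset (gprod op (gprod op fullset A) (gprod op fullset A)) A.
Proof.
  intros HA s Hs.
  apply (left_ideal_gprod_sub (gprod op fullset A)); [exact HA |].
  destruct Hs as [p [d [q [Hp [Hq ->]]]]].
  exists p, d, q. repeat split; [exact Hp |].
  exact (left_ideal_gprod_sub fullset A HA q Hq).
Qed.

Lemma fullset_left_ideal : inhabited S -> left_gamma_ideal op (@fullset S).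
Proof.
  intros [s0]. split; [exists s0; exact I | intros s _; exact I].
Qed.

Hypothesis swap : forall (a b c : S) (al be : G), op a al (op b be c) = op b al (op a be c).

Lemma gamma_AGss_paramedial (x y z w : S) (g d e : G) :
  op (op x g y) d (op z e w) = op (op w g y) d (op z e x).
Proof.
  rewrite swap, invertive, swap. reflexivity.
Qed.

Lemma intra_regular_eq (a x y : S) (be ga de : G) :
  a = op (op x be (op a de a)) ga y -> a = op (op y be (op x de a)) ga a.
Proof.
  intros Ha. rewrite invertive, swap. exact Ha.
Qed.

Lemma intra_regular_left_ideal_sub (A : S -> Prop) :
  intra_regular op -> left_gamma_ideal op A ->
  subset A (gprod op (gprod op fullset A) (gprod op fullset A)).
Proof.
  intros Hir HA a Aa.
  destruct (Hir a) as [x [y [be [ga [de Ha]]]]].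
  apply intra_regular_eq in Ha.
  assert (Axa : A (op x de a)).
  { apply (left_ideal_gprod_sub fullset A HA). exists x, de, a. repeat split; auto. }
  exists (op y be (op x de a)), ga, a. repeat split.
  - exists y, be, (op x de a). repeat split; auto.
  - exists (op y be (op x de a)), ga, a. repeat split; auto.
  - exact Ha.
Qed.

Section EveryProduct.

Hypothesis every_product : forall s : S, exists p h q, s = op p h q.

Lemma left_mul_left_translate (a s t : S) (g e : G) :
  exists u f, op s g (op t e a) = op u f a.
Proof.
  destruct (every_product s) as [p [h [q ->]]].
  exists (op (op q e p) h t), g.
  rewrite gamma_AG_medial, gamma_AGss_paramedial, invertive. reflexivity.
Qed.

Definition left_ideal_gen (a : S) : S -> Prop :=
  fun b => b = a \/ exists u f, b = op u f a.

Lemma left_mul_left_ideal_gen (a x b : S) (g : G) :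
  left_ideal_gen a b -> exists u f, op x g b = op u f a.
Proof.
  intros [-> | [u [f ->]]].
  - exists x, g. reflexivity.
  - apply left_mul_left_translate.
Qed.

Lemma left_ideal_gen_left_ideal (a : S) : left_gamma_ideal op (left_ideal_gen a).
Proof.
  split; [exists a; left; reflexivity |].
  intros s [x [g [b [_ [Hb ->]]]]].
  right. exact (left_mul_left_ideal_gen a x b g Hb).
Qed.

Lemma left_ideal_gen_square (a : S) :
  gprod op (gprod op fullset (left_ideal_gen a)) (gprod op fullset (left_ideal_gen a)) a ->
  exists p d e, a = op p d (op a e a).
Proof.
  intros [p [d [q [[x [g [b [_ [Hb ->]]]]] [[y [e [c [_ [Hc ->]]]]] Ha]]]]].
  destruct (left_mul_left_ideal_gen a x b g Hb) as [s1 [g1 E1]].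
  destruct (left_mul_left_ideal_gen a y c e Hc) as [t1 [e1 E2]].
  rewrite E1, E2, gamma_AG_medial in Ha.
  exists (op s1 g1 t1), d, e1. exact Ha.
Qed.

End EveryProduct.

Lemma intra_regular_of_eq (a p : S) (d e : G) :
  a = op p d (op a e a) -> exists (x y : S) (be ga de : G), a = op (op x be (op a de a)) ga y.
Proof.
  intros Ha. exists (op p e a), p, d, d, e.
  rewrite invertive, <- Ha, swap. exact Ha.
Qed.

End GammaAG.

Theorem mainTheorem13 (S G : Type) (op : S -> G -> S -> S)
  (hS : inhabited S) (hG : inhabited G) (hAG : gamma_AGss op) :
  intra_regular op <->
  (forall A : S -> Prop, left_gamma_ideal op A ->
     set_eq A (gprod op (gprod op fullset A) (gprod op fullset A))).
Proof.
  destruct hAG as [invertive swap].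
  split.
  - intros Hir A HA s. split.
    + apply intra_regular_left_ideal_sub; assumption.
    + apply left_ideal_gprod_square_sub; assumption.
  - intros H a.
    assert (every_product : forall s : S, exists p h q, s = op p h q).
    { intros s.
      destruct (proj1 (H _ (fullset_left_ideal S G op hS) s) I) as [p [h [q [_ [_ E]]]]].
      exists p, h, q. exact E. }
    assert (Ha : left_ideal_gen S G op a a) by (left; reflexivity).
    apply (H _ (left_ideal_gen_left_ideal S G op invertive swap every_product a)) in Ha.
    destruct (left_ideal_gen_square S G op invertive swap every_product a Ha) as [p [d [e Ea]]].
    exact (intra_regular_of_eq S G op invertive swap a p d e Ea).
Qed.
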